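(* Let $1\le u\le n$, let $p\ge1$, and let $X\subset\mathbb{Z}^n$ be $c_u$-connected. Let $A,B\subset X$ be finite, nonempty, $c_u$-connected sets. Suppose $H_{(X,c_u)}(A,B)\le m$ for some $m\in\mathbb{N}$. Then $H_p(A,B)\le m\,u^{1/p}$.
   Context: Two distinct points $x=(x_1,\dots,x_n),y=(y_1,\dots,y_n)\in\mathbb{Z}^n$ are $c_u$-adjacent if there are at most $u$ indices $i$ with $|x_i-y_i|=1$ and for all other indices $j$, $x_j=y_j$. A set is $c_u$-connected if any two of its points are joined by a finite sequence of points in the set with consecutive points $c_u$-adjacent. A $c_u$-path in $X$ of length $k$ from $a$ to $b$ is a sequence $a=y_0,\dots,y_k=b$ in $X$ with $y_i,y_{i+1}$ $c_u$-adjacent. $H_{(X,c_u)}(A,B)$ is the least $\varepsilon\ge0$ such that for every $a\in A$ there is $b'\in B$ and a $c_u$-path in $X$ of length $\le\varepsilon$ from $a$ to $b'$, and for every $b\in B$ there is $a'\in A$ and a $c_u$-path in $X$ of length $\le\varepsilon$ from $b$ to $a'$. $d_p(x,y)=\left(\sum_i|x_i-y_i|^p\right)^{1/p}$ and $H_p(A,B)=\min\{\varepsilon\ge0:\forall a\in A\ \exists b\in B,\ d_p(a,b)\le\varepsilon,\ \text{and}\ \forall b\in B\ \exists a\in A,\ d_p(a,b)\le\varepsilon\}$. *)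

From HB Require Import structures.
From mathcomp Require Import all_boot all_order all_algebra.
From mathcomp Require Import all_classical all_reals exp.
Set Implicit Arguments. Unset Strict Implicit. Unset Printing Implicit Defensive.
Import Order.TTheory GRing.Theory Num.Theory.
Local Open Scope ring_scope.
Local Open Scope classical_set_scope.

Definition pt (n : nat) := {ffun 'I_n -> int}.

Definition cu_adj (n u : nat) (x y : pt n) : bool :=
  [&& x != y,
      [forall i, (x i == y i) || (`|x i - y i| == 1)] &
      (#|[set i | `|x i - y i| == 1]| <= u)%N].

Definition cu_path (n u : nat) (X : set (pt n)) (a b : pt n) (k : nat) : Prop :=
  exists s : seq (pt n),
    size s = k /\ path (cu_adj u) a s /\ last a s = b /\
    (forall z, z \in a :: s -> X z).

Definition cu_connected (n u : nat) (X : set (pt n)) : Prop :=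
  forall x y, X x -> X y -> exists k, cu_path u X x y k.

Definition H_cu {R : realType} (n u : nat) (X A B : set (pt n)) : R :=
  inf [set e : R | 0 <= e /\
    (forall a, A a -> exists b' k, B b' /\ cu_path u X a b' k /\ (k%:R <= e)) /\
    (forall b, B b -> exists a' k, A a' /\ cu_path u X b a' k /\ (k%:R <= e))].

Definition d_p {R : realType} (n : nat) (p : R) (x y : pt n) : R :=
  powR (\sum_(i < n) (`|x i - y i|%:~R) `^ p) p^-1.

Definition H_p {R : realType} (n : nat) (p : R) (A B : set (pt n)) : R :=
  inf [set e : R | 0 <= e /\
    (forall a, A a -> exists b, B b /\ d_p p a b <= e) /\
    (forall b, B b -> exists a, A a /\ d_p p a b <= e)].

From HB Require Import structures.
From mathcomp Require Import all_boot all_order all_algebra.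
From mathcomp Require Import all_classical all_reals exp.
Set Implicit Arguments. Unset Strict Implicit. Unset Printing Implicit Defensive.
Import Order.TTheory GRing.Theory Num.Theory.
Local Open Scope ring_scope.
Local Open Scope classical_set_scope.

(* One c_u-step moves every coordinate by at most 1 and at most u coordinates
   at all, so a c_u-path of length k moves each coordinate by at most k and
   the coordinates by at most k u in total.  For such a displacement d,
   sum d_i^p <= k^(p-1) sum d_i <= k^p u, i.e. d_p <= k u^(1/p).  If
   H_(X,c_u)(A,B) <= m, then, since path lengths are integers, every point of
   A is joined to B (and conversely) by a path of length at most m; the set
   defining H_(X,c_u) is nonempty because A and B are finite and X is
   c_u-connected (otherwise its infimum would be the junk value 0). *)

Lemma finite_set_bounded_witness (T : choiceType) (A : set T)
    (P : T -> nat -> Prop) :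
  finite_set A -> (forall a, A a -> exists k, P a k) ->
  exists K, forall a, A a -> exists2 k, (k <= K)%N & P a k.
Proof.
move=> /finite_fsetP[F eqA] AP.
have [f Pf] : {f : T -> nat & forall a, A a -> P a (f a)}.
  apply: (@choice _ _ (fun a k => A a -> P a k)) => a.
  have [Aa|NAa] := pselect (A a); last by exists 0%N.
  by have [k Pk] := AP a Aa; exists k.
exists (\max_(a <- finmap.enum_fset F) f a) => a Aa.
by exists (f a); [apply: leq_bigmax_seq; rewrite eqA in Aa|exact: Pf].
Qed.

Lemma card_set_sum_bool (T : finType) (b : pred T) :
  #|[set x | b x]| = \sum_x (b x : nat).
Proof.
rewrite -sum1_card big_mkcond /=; apply: eq_bigr => x _.
case: ifP => [/set_mem /= -> //|/negP bxN].
by case: (boolP (b x)) => // bx; case: bxN; exact: mem_set.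
Qed.

Lemma cu_adj_dist (n u : nat) (x y : pt n) : cu_adj u x y ->
  (forall i, `|x i - y i|%N <= 1)%N /\ (\sum_i `|x i - y i|%N <= u)%N.
Proof.
case/and3P => _ /forallP step card_le.
have distE i : `|x i - y i|%N = (`|x i - y i| == 1) :> nat.
  have [/eqP->|/eqP d1] := orP (step i); first by rewrite subrr.
  by rewrite d1; apply/eqP; rewrite -eqz_nat abszE d1.
split=> [i|]; first by rewrite distE; case: (_ == _).
by rewrite (eq_bigr _ (fun i _ => distE i)) -card_set_sum_bool.
Qed.

Lemma cu_adj_path_dist (n u : nat) (a : pt n) (s : seq (pt n)) :
  path (cu_adj u) a s ->
  (forall i, `|a i - last a s i|%N <= size s)%N /\
  (\sum_i `|a i - last a s i|%N <= size s * u)%N.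
Proof.
elim: s a => [|z s IH] a /=.
  by move=> _; split=> [i|]; rewrite ?big1 // => *; rewrite subrr.
case/andP=> /cu_adj_dist[step1 stepu] /IH[rest1 restu].
have triangle i : (`|a i - last z s i| <= `|a i - z i| + `|z i - last z s i|)%N.
  exact: leqD_dist.
split=> [i|]; first by rewrite (leq_trans (triangle i)) // -add1n leq_add.
apply: leq_trans; first by apply: leq_sum => i _; exact: triangle.
by rewrite big_split /= mulSn leq_add.
Qed.

Lemma powR_sum_le (R : realType) (I : finType) (d : I -> R) (k c p : R) :
  1 <= p -> 0 <= k -> 0 <= c -> (forall i, 0 <= d i <= k) ->
  \sum_i d i <= k * c ->
  (\sum_i d i `^ p) `^ p^-1 <= k * c `^ p^-1.
Proof.
move=> p_ge1 k_ge0 c_ge0 d_bd sum_le.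
have p_gt0 : 0 < p by rewrite (lt_le_trans ltr01).
have sum_pow_le : \sum_i d i `^ p <= k `^ p * c.
  apply: (@le_trans _ _ (\sum_i k `^ (p - 1) * d i)).
    apply: ler_sum => i _; have /andP[d_ge0 d_le] := d_bd i.
    rewrite -mulr_powRB1 // mulrC ler_wpM2r // ge0_ler_powR ?nnegrE ?subr_ge0 //.
  by rewrite -mulr_sumr -(mulr_powRB1 k_ge0 p_gt0) -mulrA mulrCA ler_wpM2l ?powR_ge0.
apply: (@le_trans _ _ ((k `^ p * c) `^ p^-1)).
  apply: ge0_ler_powR => //; first by rewrite invr_ge0 ltW.
    by rewrite nnegrE sumr_ge0 // => i _; rewrite powR_ge0.
  by rewrite nnegrE mulr_ge0 ?powR_ge0.
by rewrite powRM ?powR_ge0 // -powRrM mulfV ?gt_eqF // powRr1.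
Qed.

Lemma d_pC (R : realType) (n : nat) (p : R) (x y : pt n) :
  d_p p x y = d_p p y x.
Proof. by rewrite /d_p; congr powR; apply: eq_bigr => i _; rewrite distrC. Qed.

Lemma d_p_le_cu_path (R : realType) (n u : nat) (p : R) (X : set (pt n))
    (x y : pt n) (k : nat) :
  1 <= p -> cu_path u X x y k -> d_p p x y <= k%:R * u%:R `^ p^-1.
Proof.
move=> p_ge1 [s [<- [xs_path [<- _]]]].
have [coord_le sum_le] := cu_adj_path_dist xs_path.
rewrite /d_p (eq_bigr (fun i => (`|x i - last x s i|%N%:R : R) `^ p)); last first.
  by move=> i _; rewrite -abszE.
apply: powR_sum_le; rewrite ?ler0n //.
- by move=> i; rewrite ler0n ler_nat coord_le.
- by rewrite -natr_sum -natrM ler_nat.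
Qed.

Lemma H_p_le (R : realType) (n : nat) (p e : R) (A B : set (pt n)) :
  0 <= e ->
  (forall a, A a -> exists b, B b /\ d_p p a b <= e) ->
  (forall b, B b -> exists a, A a /\ d_p p a b <= e) ->
  H_p p A B <= e.
Proof. by move=> e_ge0 AB BA; apply: ge_inf => //; exists 0 => x []. Qed.

Lemma cu_paths_bounded (n u : nat) (X A B : set (pt n)) :
  cu_connected u X -> A `<=` X -> B `<=` X -> finite_set A -> B !=set0 ->
  exists K, forall a, A a ->
    exists b k, B b /\ cu_path u X a b k /\ (k <= K)%N.
Proof.
move=> X_conn AX BX A_fin [b0 Bb0].
have path_to_B a : A a -> exists k, exists2 b, B b & cu_path u X a b k.
  by move=> Aa; have [k a_b0] := X_conn a b0 (AX a Aa) (BX b0 Bb0); exists k, b0.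
have [K HK] := finite_set_bounded_witness A_fin path_to_B.
by exists K => a /HK[k k_le [b Bb ab]]; exists b, k.
Qed.

Lemma H_cu_le_nat (R : realType) (n u m : nat) (X A B : set (pt n)) :
  cu_connected u X -> A `<=` X -> B `<=` X ->
  finite_set A -> finite_set B -> A !=set0 -> B !=set0 ->
  H_cu u X A B <= (m%:R : R) ->
  (forall a, A a -> exists b k, B b /\ cu_path u X a b k /\ (k <= m)%N) /\
  (forall b, B b -> exists a k, A a /\ cu_path u X b a k /\ (k <= m)%N).
Proof.
move=> X_conn AX BX A_fin B_fin A_ne B_ne H_le.
have [KA HKA] := cu_paths_bounded X_conn AX BX A_fin B_ne.
have [KB HKB] := cu_paths_bounded X_conn BX AX B_fin A_ne.
move: H_le; rewrite /H_cu; set S := [set e | _] => H_le.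
have S_ne : S !=set0.
  exists (maxn KA KB)%:R; split; first exact: ler0n.
  split=> [a /HKA|b /HKB] [c [k [Sc [path_k k_le]]]]; exists c, k;
    by rewrite ler_nat (leq_trans k_le) ?leq_maxl ?leq_maxr.
have [e [_ [AB BA]] e_lt] : exists2 e, S e & e < m.+1%:R.
  by apply: inf_lt S_ne _; rewrite (le_lt_trans H_le) // ltr_nat.
have le_m (k : nat) : k%:R <= e -> (k <= m)%N.
  by move=> k_le; rewrite -ltnS -(ltr_nat R) (le_lt_trans k_le).
split=> [a /AB|b /BA] [c [k [Sc [path_k k_le]]]]; exists c, k; by rewrite le_m.
Qed.

Theorem theorem3p4 (R : realType) (n u : nat) (p : R) (m : nat)
  (X A B : set (pt n)) :
  (1 <= u)%N -> (u <= n)%N -> 1 <= p ->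
  cu_connected u X ->
  A `<=` X -> B `<=` X ->
  finite_set A -> finite_set B -> A !=set0 -> B !=set0 ->
  cu_connected u A -> cu_connected u B ->
  H_cu u X A B <= (m%:R : R) ->
  H_p p A B <= m%:R * powR (u%:R) p^-1.
Proof.
move=> _ _ p_ge1 X_conn AX BX A_fin B_fin A_ne B_ne _ _ H_le.
have [AB BA] := H_cu_le_nat X_conn AX BX A_fin B_fin A_ne B_ne H_le.
have path_le (x y : pt n) k : cu_path u X x y k -> (k <= m)%N ->
    d_p p x y <= m%:R * u%:R `^ p^-1.
  move=> xy k_le; apply: le_trans (d_p_le_cu_path p_ge1 xy) _.
  by rewrite ler_wpM2r ?powR_ge0 // ler_nat.
apply: H_p_le; first by rewrite mulr_ge0 ?powR_ge0.
  move=> a /AB[b [k [Bb [ab k_le]]]]; exists b; split; first exact: Bb.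
  exact: path_le ab k_le.
move=> b /BA[a [k [Aa [ba k_le]]]]; exists a; split; first exact: Aa.
by rewrite d_pC; exact: path_le ba k_le.
Qed.
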